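(* Let $\mathbf{a}$ be a non-periodic CSCA and $j\in\{1,2,3\}$. Let $\xi\in\mathcal{P}^2$ be non-zero. Then there is at most one time $t\ge0$ such that $\mathbf{a}^t\xi$ is of ''type $j$'', where type $1$ means $\mathbf{a}^t\xi=(p,0)$, type $3$ means $\mathbf{a}^t\xi=(0,p)$, and type $2$ means $\mathbf{a}^t\xi=(p,p)$ for some non-zero $p\in\mathcal{P}$. Equivalently: in the history $T^t(W(\xi))$, $t\ge 0$, of a non-periodic CQCA $T$, a finite tensor product consisting only of $\sigma_j$'s and identities occurs at most once.
   Context: $\mathcal{P}$ = Laurent polynomials in $u$ over $\mathbb{Z}_2$, $\mathcal{R}$ its palindromes. A CSCA is a $2\times2$ matrix over $\mathcal{R}$ of determinant $1$; it is periodic if some positive power is the identity. A vector $\xi=(\xi_+,\xi_-)\in\mathcal{P}^2$ labels the Pauli product $W(\xi)=\bigotimes_xW(\xi_+(x),\xi_-(x))$ with $W(1,0)=\sigma_1$, $W(0,1)=\sigma_3$, $W(1,1)\propto\sigma_2$, $W(0,0)=\mathbb{1}$; a CQCA $T$ acts as $T(W(\xi))\propto W(\mathbf{a}\xi)$. *)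

From HB Require Import structures.
From mathcomp Require Import all_boot all_order all_algebra.
From mathcomp Require Import finmap.
Set Implicit Arguments. Unset Strict Implicit. Unset Printing Implicit Defensive.
Import GRing.Theory Num.Theory.
Local Open Scope fset_scope.
Local Open Scope ring_scope.

(* Since coefficients lie in
   Z_2 = {0,1}, a Laurent polynomial p = \sum_n p_n u^n is the same thing as
   its (finite) support {n : int | p_n = 1}.  We represent it that way:
   n \in p  <=>  the coefficient of u^n in p is 1. *)
Definition laurent := {fset int}.

Definition lzero : laurent := fset0.
Definition lone : laurent := [fset (0:int)].
(* coefficientwise addition mod 2 = symmetric difference of supports *)
Definition ladd (p q : laurent) : laurent := (p `\` q) `|` (q `\` p).
(* product: coefficient of u^n is  \sum_k p_k q_(n-k)  mod 2, i.e. the parity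
   of #{k in supp p | n - k in supp q} *)
Definition lmul (p q : laurent) : laurent :=
  [fset n in [fset i + j | i in p, j in q]
     | odd #|` [fset k in p | (n - k) \in q]| ].
(* p(u^{-1}) *)
Definition linv_var (p : laurent) : laurent := [fset - n | n in p].
Definition palindromic (p : laurent) : Prop := linv_var p = p.

Definition lvec := (laurent * laurent)%type.
Definition vzero : lvec := (lzero, lzero).

Record lmat := LMat { m11 : laurent; m12 : laurent; m21 : laurent; m22 : laurent }.
Definition mone : lmat := LMat lone lzero lzero lone.
Definition mmul (a b : lmat) : lmat :=
  LMat (ladd (lmul (m11 a) (m11 b)) (lmul (m12 a) (m21 b)))
       (ladd (lmul (m11 a) (m12 b)) (lmul (m12 a) (m22 b)))
       (ladd (lmul (m21 a) (m11 b)) (lmul (m22 a) (m21 b)))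
       (ladd (lmul (m21 a) (m12 b)) (lmul (m22 a) (m22 b))).
Definition mpow (a : lmat) (t : nat) : lmat := iter t (mmul a) mone.
(* determinant (in characteristic 2, minus = plus) *)
Definition mdet (a : lmat) : laurent :=
  ladd (lmul (m11 a) (m22 a)) (lmul (m12 a) (m21 a)).
Definition mapply (a : lmat) (xi : lvec) : lvec :=
  (ladd (lmul (m11 a) xi.1) (lmul (m12 a) xi.2),
   ladd (lmul (m21 a) xi.1) (lmul (m22 a) xi.2)).

Definition CSCA (a : lmat) : Prop :=
  [/\ palindromic (m11 a), palindromic (m12 a), palindromic (m21 a),
      palindromic (m22 a) & mdet a = lone].
Definition periodic (a : lmat) : Prop := exists n : nat, (0 < n)%N /\ mpow a n = mone.

Definition of_type (j : nat) (v : lvec) : Prop :=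
  exists2 p : laurent, p <> lzero &
    match j with
    | 1%N => v = (p, lzero)
    | 2%N => v = (p, p)
    | 3%N => v = (lzero, p)
    | _ => False
    end.

(* Suppose a^s, s > 0, sends a vector of type j to a vector of type j.  After a change
   of basis by a CSCA involution, j = 1, so a^s = [[x, y], [z, w]] sends (p, 0) to some
   (q, 0) with p <> 0; hence z p = 0 and z = 0, since P is an integral domain.  Then
   x w = 1, and the only palindromic unit of P is 1 (a unit is a monomial u^n, and
   palindromy forces n = 0), so a^s = [[1, y], [0, 1]], whose square is 1 in
   characteristic 2.  Thus a^(2s) = 1 and a is periodic. *)
Set Warnings "-notation-overridden,-ambiguous-paths,-notation-incompatible-prefix".
From mathcomp Require Import all_boot all_order all_algebra.
From mathcomp Require Import finmap zify.
From Stdlib Require Import Ring_theory Ring.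
Set Implicit Arguments. Unset Strict Implicit. Unset Printing Implicit Defensive.
Import Order.TTheory GRing.Theory.
Local Open Scope fset_scope.
Local Open Scope ring_scope.

Definition lcoef (p : laurent) (n : int) : 'F_2 := (n \in p)%:R.

Lemma natr_F2 (m : nat) : (m%:R : 'F_2) = (odd m)%:R.
Proof.
elim: m => // m IH; rewrite -[m.+1]addn1 natrD IH oddD /=.
by case: (odd m); apply/eqP.
Qed.

Lemma lcoef_inj p q : (forall n, lcoef p n = lcoef q n) -> p = q.
Proof.
move=> Epq; apply/fsetP => n; have := Epq n; rewrite /lcoef.
by case: (n \in p); case: (n \in q) => // /eqP.
Qed.

Lemma lcoef_eq1 p n : (lcoef p n == 1) = (n \in p).
Proof. by rewrite /lcoef; case: (n \in p). Qed.

Lemma lcoef0 n : lcoef lzero n = 0.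
Proof. by rewrite /lcoef inE. Qed.

Lemma lcoef1 n : lcoef lone n = (n == 0)%:R.
Proof. by rewrite /lcoef inE. Qed.

Lemma lcoefD p q n : lcoef (ladd p q) n = lcoef p n + lcoef q n.
Proof. by rewrite /lcoef !inE; case: (n \in p); case: (n \in q); apply/eqP. Qed.

Lemma sum_lcoef_eq (q : laurent) (m : int) : \sum_(j <- q) (j == m)%:R = lcoef q m.
Proof.
have -> : lcoef q m = (count (pred1 m) q)%:R by rewrite count_uniq_mem ?fset_uniq.
rewrite -sum1_count natr_sum [RHS]big_mkcond; apply: eq_bigr => j _.
by rewrite /=; case: (j == m).
Qed.

Lemma lcoefM p q n : lcoef (lmul p q) n = \sum_(i <- p) lcoef q (n - i).
Proof.
have count_q : #|` [fset k in p | n - k \in q]| = count (fun k => n - k \in q) p.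
  by rewrite card_fset_sum1 -big_fset_condE sum1_count.
have -> : \sum_(i <- p) lcoef q (n - i) = (count (fun k => n - k \in q) p)%:R.
  rewrite -sum1_count natr_sum [RHS]big_mkcond; apply: eq_bigr => i _.
  by rewrite /lcoef; case: ifP.
rewrite natr_F2 /lcoef /lmul !inE -count_q.
case odd_n: (odd _); rewrite ?andbF ?andbT //.
have /hasP[k kp kq] : has (fun k => n - k \in q) p.
  by rewrite has_count -count_q; case: #|` _| odd_n.
by rewrite -[n](subrKC k) in_imfset2.
Qed.

Lemma lcoefM2 p q n :
  lcoef (lmul p q) n = \sum_(i <- p) \sum_(j <- q) (i + j == n)%:R.
Proof.
rewrite lcoefM; apply: eq_bigr => i _; rewrite -sum_lcoef_eq.
by apply: eq_bigr => j _; congr (_%:R); apply/eqP/eqP; lia.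
Qed.

Lemma lmulC p q : lmul p q = lmul q p.
Proof.
apply: lcoef_inj => n; rewrite !lcoefM2 exchange_big.
by apply: eq_bigr => i _; apply: eq_bigr => j _; rewrite addrC.
Qed.

Lemma lmulA p q r : lmul p (lmul q r) = lmul (lmul p q) r.
Proof.
apply: lcoef_inj => n; rewrite [lmul (lmul p q) r]lmulC !lcoefM.
under eq_bigr do rewrite lcoefM2.
under [RHS]eq_bigr do rewrite lcoefM2.
rewrite [RHS]exchange_big; apply: eq_bigr => i _.
rewrite [RHS]exchange_big; apply: eq_bigr => j _.
apply: eq_bigr => l _; congr (_%:R).
by apply/eqP/eqP; lia.
Qed.

Lemma lmulDr p q r : lmul p (ladd q r) = ladd (lmul p q) (lmul p r).
Proof.
apply: lcoef_inj => n; rewrite lcoefD !lcoefM -big_split.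
by apply: eq_bigr => i _; rewrite lcoefD.
Qed.

Lemma lmulDl p q r : lmul (ladd p q) r = ladd (lmul p r) (lmul q r).
Proof. by rewrite lmulC lmulDr !(lmulC r). Qed.

Lemma lmul1 p : lmul lone p = p.
Proof. by apply: lcoef_inj => n; rewrite lcoefM big_seq_fset1 subr0. Qed.

Lemma lmul0 p : lmul lzero p = lzero.
Proof. by apply: lcoef_inj => n; rewrite lcoefM big_seq_fset0. Qed.

Lemma laddC p q : ladd p q = ladd q p.
Proof. by apply: lcoef_inj => n; rewrite !lcoefD addrC. Qed.

Lemma laddA p q r : ladd p (ladd q r) = ladd (ladd p q) r.
Proof. by apply: lcoef_inj => n; rewrite !lcoefD addrA. Qed.

Lemma ladd0 p : ladd lzero p = p.
Proof. by apply: lcoef_inj => n; rewrite lcoefD lcoef0 add0r. Qed.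

Lemma laddxx p : ladd p p = lzero.
Proof.
by apply: lcoef_inj => n; rewrite lcoefD lcoef0 /lcoef; case: (n \in p); apply/eqP.
Qed.

(* Characteristic 2: the opposite is the identity. *)
Lemma laurent_ring_theory :
  ring_theory lzero lone ladd lmul ladd (fun x => x) (@eq laurent).
Proof.
split; [exact: ladd0 | exact: laddC | exact: laddA | exact: lmul1 | exact: lmulC
       | exact: lmulA | exact: lmulDl | by [] | exact: laddxx].
Qed.

Definition laurent_of_bool (b : bool) : laurent := if b then lone else lzero.

(* Declaring Z_2 = bool as the ring of constants lets [ring] use [x + x = 0]. *)
Lemma laurent_of_bool_morph :
  ring_morph lzero lone ladd lmul ladd (fun x => x) (@eq laurent)
    false true xorb andb xorb (fun x => x) Bool.eqb laurent_of_bool.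
Proof.
split => //.
- by case; case; rewrite /= ?laddxx ?ladd0 // laddC ladd0.
- by case; case; rewrite /= ?laddxx ?ladd0 // laddC ladd0.
- by case; case; rewrite /= ?lmul1 ?lmul0 // lmulC lmul0.
- by case; case.
Qed.

Ltac laurent_cst t :=
  match t with
  | lzero => constr:(false)
  | lone => constr:(true)
  | _ => constr:(InitialRing.NotConstant)
  end.

Add Ring laurent_ring :
  laurent_ring_theory (morphism laurent_of_bool_morph, constants [laurent_cst]).

Lemma lcoef_linv_var p n : lcoef (linv_var p) n = lcoef p (- n).
Proof. by rewrite /lcoef /linv_var -{1}[n]opprK mem_imfset //; exact: oppr_inj. Qed.

Lemma linv_varM p q : linv_var (lmul p q) = lmul (linv_var p) (linv_var q).
Proof.
have opp_inj (r : laurent) : {in r &, injective (fun x : int => - x)}.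
  exact: in2W oppr_inj.
apply: lcoef_inj => n; rewrite lcoef_linv_var !lcoefM2 /linv_var.
rewrite big_imfset /=; last exact: opp_inj.
apply: eq_bigr => i _; rewrite big_imfset /=; last exact: opp_inj.
by apply: eq_bigr => j _; congr (_%:R); apply/eqP/eqP; lia.
Qed.

Lemma linv_varD p q : linv_var (ladd p q) = ladd (linv_var p) (linv_var q).
Proof. by apply: lcoef_inj => n; rewrite !(lcoef_linv_var, lcoefD). Qed.

Lemma palindromicM p q : palindromic p -> palindromic q -> palindromic (lmul p q).
Proof. by rewrite /palindromic linv_varM => -> ->. Qed.

Lemma palindromicD p q : palindromic p -> palindromic q -> palindromic (ladd p q).
Proof. by rewrite /palindromic linv_varD => -> ->. Qed.

Lemma palindromic1 : palindromic lone.
Proof. by apply: lcoef_inj => n; rewrite lcoef_linv_var !lcoef1 oppr_eq0. Qed.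

Lemma palindromic0 : palindromic lzero.
Proof. by apply: lcoef_inj => n; rewrite lcoef_linv_var !lcoef0. Qed.

Lemma fset_int_max (p : {fset int}) x : x \in p ->
  exists2 m, m \in p & forall k, k \in p -> k <= m.
Proof.
move=> xp; case: (arg_maxP (fun i : p => val i) (i0 := [` xp]) (P := predT) erefl).
by move=> m _ max_m; exists (val m) => [|k kp]; [exact: fsvalP | exact: (max_m [` kp])].
Qed.

Lemma fset_int_min (p : {fset int}) x : x \in p ->
  exists2 m, m \in p & forall k, k \in p -> m <= k.
Proof.
move=> xp; case: (arg_minP (fun i : p => val i) (i0 := [` xp]) (P := predT) erefl).
by move=> m _ min_m; exists (val m) => [|k kp]; [exact: fsvalP | exact: (min_m [` kp])].
Qed.

Lemma laurent_neq0P (p : laurent) : p <> lzero -> exists x, x \in p.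
Proof. by move=> /eqP /fset0Pn. Qed.

Lemma mem_lmul_unique_sum p q i0 j0 : i0 \in p -> j0 \in q ->
  (forall i j, i \in p -> j \in q -> i + j = i0 + j0 -> i = i0) ->
  i0 + j0 \in lmul p q.
Proof.
move=> i0p j0q uniq_i0; rewrite -lcoef_eq1 lcoefM (bigD1_seq i0) ?fset_uniq //=.
rewrite addrAC subrr add0r big1_seq ?addr0 ?lcoef_eq1 // => i /andP[i_neq i_p].
case q_i: (i0 + j0 - i \in q); last by rewrite /lcoef q_i.
by rewrite -(uniq_i0 _ _ i_p q_i (subrKC i _)) eqxx in i_neq.
Qed.

Lemma mem_lmul_max p q mp mq : mp \in p -> mq \in q ->
  (forall k, k \in p -> k <= mp) -> (forall k, k \in q -> k <= mq) ->
  mp + mq \in lmul p q.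
Proof.
move=> mpp mqq max_p max_q; apply: mem_lmul_unique_sum => // i j ip jq.
by have := max_p i ip; have := max_q j jq; lia.
Qed.

Lemma mem_lmul_min p q mp mq : mp \in p -> mq \in q ->
  (forall k, k \in p -> mp <= k) -> (forall k, k \in q -> mq <= k) ->
  mp + mq \in lmul p q.
Proof.
move=> mpp mqq min_p min_q; apply: mem_lmul_unique_sum => // i j ip jq.
by have := min_p i ip; have := min_q j jq; lia.
Qed.

Lemma lmul_neq0 p q : p <> lzero -> q <> lzero -> lmul p q <> lzero.
Proof.
move=> /laurent_neq0P[x xp] /laurent_neq0P[y yq].
have [mp mpp max_p] := fset_int_max xp; have [mq mqq max_q] := fset_int_max yq.
by move=> pq0; have := mem_lmul_max mpp mqq max_p max_q; rewrite pq0 inE.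
Qed.

(* The exponent ranges of p and q add up to that of p q = 1, which is a point. *)
Lemma palindromic_unit_eq1 p q : palindromic p -> lmul p q = lone -> p = lone.
Proof.
move=> pal_p pq1.
have lone_neq0 : lone <> lzero by move/fsetP/(_ 0); rewrite !inE.
have [x xp] : exists x, x \in p.
  by apply: laurent_neq0P => p0; apply: lone_neq0; rewrite -pq1 p0 lmul0.
have [y yq] : exists y, y \in q.
  by apply: laurent_neq0P => q0; apply: lone_neq0; rewrite -pq1 lmulC q0 lmul0.
have [Mp Mpp max_p] := fset_int_max xp; have [Mq Mqq max_q] := fset_int_max yq.
have [mp mpp min_p] := fset_int_min xp; have [mq mqq min_q] := fset_int_min yq.
have top : Mp + Mq = 0.
  by have := mem_lmul_max Mpp Mqq max_p max_q; rewrite pq1 inE => /eqP.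
have bot : mp + mq = 0.
  by have := mem_lmul_min mpp mqq min_p min_q; rewrite pq1 inE => /eqP.
have p_const k : k \in p -> k = Mp.
  move=> kp; have := max_p k kp; have := min_p k kp.
  by have := min_p Mp Mpp; have := max_q mq mqq; have := min_q Mq Mqq; lia.
have Mp0 : Mp = 0.
  have : - Mp \in p by rewrite -lcoef_eq1 -lcoef_linv_var pal_p lcoef_eq1.
  by move/p_const; lia.
by apply/fsetP => k; rewrite inE; apply/idP/eqP => [/p_const | ->]; rewrite -?Mp0.
Qed.

Lemma mapply_mmul A B v : mapply (mmul A B) v = mapply A (mapply B v).
Proof.
by case: A B v => [a b c d] [e f g h] [x y]; rewrite /mapply /=; congr pair; ring.
Qed.

Lemma mapply1m v : mapply mone v = v.
Proof. by case: v => x y; rewrite /mapply /=; congr pair; ring. Qed.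

Lemma mmulA A B C : mmul A (mmul B C) = mmul (mmul A B) C.
Proof.
by case: A B C => [a b c d] [e f g h] [x y z w]; rewrite /mmul /=; congr LMat; ring.
Qed.

Lemma mmul1m A : mmul mone A = A.
Proof. by case: A => [a b c d]; rewrite /mmul /=; congr LMat; ring. Qed.

Lemma mmulm1 A : mmul A mone = A.
Proof. by case: A => [a b c d]; rewrite /mmul /=; congr LMat; ring. Qed.

Lemma mpowD a s t : mpow a (s + t) = mmul (mpow a s) (mpow a t).
Proof.
elim: s => [|s IH]; first by rewrite mmul1m.
by rewrite addSn [mpow a (s + t).+1]/mpow /= -/(mpow a (s + t)) IH mmulA.
Qed.

Lemma mdetM A B : mdet (mmul A B) = lmul (mdet A) (mdet B).
Proof. by case: A B => [a b c d] [e f g h]; rewrite /mdet /=; ring. Qed.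

Lemma CSCA1 : CSCA mone.
Proof.
split; [exact: palindromic1 | exact: palindromic0 | exact: palindromic0
       | exact: palindromic1 | rewrite /mdet /=; ring].
Qed.

Lemma CSCA_mmul A B : CSCA A -> CSCA B -> CSCA (mmul A B).
Proof.
case: A B => [a b c d] [e f g h] [/= pa pb pc pd dA] [/= pe pf pg ph dB].
split; last by rewrite mdetM dA dB lmul1.
all: by apply: palindromicD; apply: palindromicM.
Qed.

Lemma CSCA_mpow a t : CSCA a -> CSCA (mpow a t).
Proof. by move=> Ca; elim: t => [|t IH]; [exact: CSCA1 | exact: CSCA_mmul]. Qed.

Section ConjugateByInvolution.
Variables (T : Type) (mul : T -> T -> T) (one : T).
Hypotheses (mulA : associative mul) (mul1 : left_id one mul) (mulr1 : right_id one mul).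

Lemma conj_involutive_sqr_eq1 b m : mul b b = one ->
  mul (mul b (mul m b)) (mul b (mul m b)) = one -> mul m m = one.
Proof.
move=> bb; rewrite -!mulA (mulA b b) bb mul1 => bmmb1.
have -> : mul m m = mul b (mul (mul b (mul m (mul m b))) b).
  by rewrite !mulA bb mul1 -!mulA bb mulr1.
by rewrite bmmb1 mul1 bb.
Qed.

End ConjugateByInvolution.

Definition type_frame (j : nat) : lmat :=
  match j with
  | 2%N => LMat lone lzero lone lone
  | 3%N => LMat lzero lone lone lzero
  | _ => mone
  end.

Lemma CSCA_type_frame j : CSCA (type_frame j).
Proof.
case: j => [|[|[|[|j]]]]; try exact: CSCA1;
  split=> /=; try exact: palindromic0; try exact: palindromic1; rewrite /mdet /=; ring.
Qed.

Lemma type_frame_involutive j : mmul (type_frame j) (type_frame j) = mone.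
Proof.
by case: j => [|[|[|[|j]]]]; rewrite ?mmul1m // /mmul /mone /=; congr LMat; ring.
Qed.

Lemma of_type_frame j v : of_type j v -> of_type 1 (mapply (type_frame j) v).
Proof.
case: j => [|[|[|[|j]]]] [p p0 //] ->; exists p => //;
  rewrite /mapply /=; congr pair; ring.
Qed.

Lemma CSCA_fix_type1_involutive M v :
  CSCA M -> of_type 1 v -> of_type 1 (mapply M v) -> mmul M M = mone.
Proof.
case: M => a b c d [/= pal_a _ _ _]; rewrite /mdet /= => det1 [p p0 ->] [q _].
rewrite /mapply /= => -[_ cp0].
have c0 : c = lzero.
  have [//|/eqP c_neq0] := eqVneq c lzero.
  by case: (lmul_neq0 c_neq0 p0); rewrite -cp0; ring.
have ad1 : lmul a d = lone by rewrite -det1 c0; ring.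
have a1 := palindromic_unit_eq1 pal_a ad1.
have d1 : d = lone by rewrite -ad1 a1; ring.
by rewrite /mmul c0 a1 d1 /=; congr LMat; ring.
Qed.

Lemma CSCA_fix_type_involutive M j v : CSCA M ->
  of_type j v -> of_type j (mapply M v) -> mmul M M = mone.
Proof.
move=> CM vj Mvj; set B := type_frame j.
have BB : mmul B B = mone := type_frame_involutive j.
have CB : CSCA B := CSCA_type_frame j.
apply: (conj_involutive_sqr_eq1 mmulA mmul1m mmulm1 BB).
apply: (@CSCA_fix_type1_involutive _ (mapply B v)).
- by apply: CSCA_mmul => //; apply: CSCA_mmul.
- exact: of_type_frame.
- rewrite (mapply_mmul B (mmul M B)) (mapply_mmul M B) -(mapply_mmul B B v) BB mapply1m.
  exact: of_type_frame.
Qed.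

Theorem lemmaA1 (a : lmat) (j : nat) (xi : lvec) :
  CSCA a -> ~ periodic a -> (1 <= j <= 3)%N -> xi <> vzero ->
  forall t1 t2 : nat,
    of_type j (mapply (mpow a t1) xi) -> of_type j (mapply (mpow a t2) xi) ->
    t1 = t2.
Proof.
move=> Ca aperiodic _ _ t1 t2.
wlog le_t12 : t1 t2 / (t1 <= t2)%N.
  by move=> W T1 T2; case: (leqP t1 t2) => [|/ltnW] le; [exact: W | symmetry; exact: W].
rewrite -(subnK le_t12); case: (t2 - t1)%N => [//|s] T1 T2.
rewrite mpowD mapply_mmul in T2.
have invol := CSCA_fix_type_involutive (CSCA_mpow s.+1 Ca) T1 T2.
by case: aperiodic; exists (s.+1 + s.+1)%N; rewrite mpowD invol.
Qed.
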